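(* Assume $\beta S\le Z$ almost surely (in particular under $(\beta,\alpha)$-bounded estimates). Then for every $z>0$, $$u_{\mathrm{SRPT\text{-}B}}(z)-u_{\mathrm{SRPT\text{-}SE}}(z)\le 3z\max\{1-\beta,0\}\,\mathbb{E}[S\mathbf 1(Z>z)].$$
   Context: $(S,Z)$ is a random pair of positive reals (true size and estimated size of a random job), and $0<\beta\le\alpha$ are constants. Rank functions on job states $(s,z,a)$ with age $a\in[0,s)$: SRPT-B: $r(s,z,a)=\min\{|z-a|,z\}$; SRPT-SE: $r(s,z,a)=\frac{z}{s}(s-a)$. For a policy $\pi$ with rank function $r_\pi$, $u_\pi(x)=\mathbb{E}\big[\,\big|\{a\in[0,S): r_\pi(S,Z,a)\le x\}\big|^2\big]$, where $|\cdot|$ is Lebesgue measure. *)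

From HB Require Import structures.
From mathcomp Require Import all_boot all_order all_algebra.
From mathcomp Require Import all_classical all_reals all_analysis.
Set Implicit Arguments. Unset Strict Implicit. Unset Printing Implicit Defensive.
Import Order.TTheory GRing.Theory Num.Theory.
Local Open Scope classical_set_scope.
Local Open Scope ring_scope.

(* Rank functions on job states (s, z, a): true size s, estimated size z, age a. *)
Definition rank_SRPT_B {R : realType} (s z a : R) : R :=
  Num.min `|z - a| z.
Definition rank_SRPT_SE {R : realType} (s z a : R) : R :=
  z / s * (s - a).

Definition low_rank_ages {R : realType} (r : R -> R -> R -> R) (s z x : R) : set R :=
  [set a | 0 <= a /\ a < s /\ r s z a <= x].

Definition u_policy {d : measure_display} {T : measurableType d} {R : realType}
  (P : probability T R) (S Z : T -> R) (r : R -> R -> R -> R) (x : R) : \bar R :=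
  (\int[P]_w ((@lebesgue_measure R) (low_rank_ages r (S w) (Z w) x) ^+ 2))%E.

(* The SRPT-SE age set at level x of a job (s, e) is an interval of length
   min(s, x s / e); the SRPT-B one has length s if e <= x and otherwise is
   [e - x, e + x] cut to [0, s).  Pointwise: for e <= x both lengths are s; for
   s <= e the SRPT-B length is at most x s / e; for e < s it equals x + m with
   m = min(x, s - e) while the SRPT-SE length is at least x, so the squares
   differ by at most 2 x m + m^2 <= 3 x m <= 3 x (1 - beta) s, as e >= beta s.
   Integrating this a.e. inequality gives the bound. *)

From HB Require Import structures.
From mathcomp Require Import all_boot all_order all_algebra.
From mathcomp Require Import all_classical all_reals all_analysis.
From mathcomp Require Import lra measurable_realfun.
Import Order.TTheory GRing.Theory Num.Theory.
Local Open Scope classical_set_scope.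
Local Open Scope ring_scope.

Section low_rank_lengths.
Context {R : realType}.
Implicit Types x s e b : R.

Definition low_rank_len_B x s e : R :=
  if e <= x then s else Num.max 0 (Num.min s (e + x) - (e - x)).

Definition low_rank_len_SE x s e : R := Num.min s (x * s / e).

Lemma low_rank_len_SE_large x s e : 0 < e -> 0 <= s -> e <= x ->
  low_rank_len_SE x s e = s.
Proof.
move=> e0 s0 ex; apply/min_idPl.
by rewrite ler_pdivlMr // [x * s]mulrC ler_wpM2l.
Qed.

Lemma low_rank_len_SE_small x s e : 0 < e -> 0 < s -> x < e ->
  low_rank_len_SE x s e = x * s / e.
Proof.
move=> e0 s0 xe; apply/min_idPr.
by rewrite ler_pdivrMr // [s * e]mulrC ltW // ltr_pM2r.
Qed.

Lemma low_rank_len_B_ge0 x s e : 0 <= s -> 0 <= low_rank_len_B x s e.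
Proof. by move=> s0; rewrite /low_rank_len_B; case: ifP; rewrite ?le_max ?lexx. Qed.

Lemma low_rank_len_B_le_SE {x s e} : 0 <= s -> 0 < e -> 0 < x -> x < e -> s <= e ->
  low_rank_len_B x s e <= x * s / e.
Proof.
move=> s0 e0 x0 xe se; rewrite /low_rank_len_B (leNgt e) xe /= ge_max.
have s_minus : s - e + x <= x * s / e.
  rewrite ler_pdivlMr //; nra.
have min_le : Num.min s (e + x) <= s by rewrite ge_min lexx.
rewrite divr_ge0 ?mulr_ge0 ?(ltW x0) ?(ltW e0) //=; lra.
Qed.

Lemma low_rank_len_B_long x s e : 0 <= x -> x < e -> e <= s ->
  low_rank_len_B x s e = x + Num.min x (s - e).
Proof.
move=> x0 xe es; rewrite /low_rank_len_B (leNgt e) xe /=.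
have -> : Num.min s (e + x) - (e - x) = x + Num.min x (s - e).
  by rewrite !minEle; do 2 case: leP => ?; lra.
by apply/max_idPr; rewrite addr_ge0 // le_min x0 subr_ge0.
Qed.

Lemma low_rank_len_B_sqr_le x s e b : 0 < s -> 0 < e -> 0 < x -> b * s <= e ->
  low_rank_len_B x s e ^+ 2
  <= low_rank_len_SE x s e ^+ 2 + 3 * x * Num.max (1 - b) 0 * (s * (x < e)%R%:R).
Proof.
move=> s0 e0 x0 bse; have [ex|xe] := leP e x.
  by rewrite /low_rank_len_B ex low_rank_len_SE_large ?(ltW s0) //= mulr0n !mulr0 addr0.
rewrite /= mulr1n mulr1 low_rank_len_SE_small //.
have slack_ge0 : 0 <= 3 * x * Num.max (1 - b) 0 * s.
  by rewrite !mulr_ge0 ?le_max ?lexx ?orbT // ltW.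
have [se|es] := leP s e.
  have := low_rank_len_B_ge0 x s e (ltW s0).
  have := low_rank_len_B_le_SE (ltW s0) e0 x0 xe se.
  nra.
have x_le_q : x <= x * s / e by rewrite ler_pdivlMr // ler_pM2l // ltW.
have s_minus_e : s - e <= (1 - b) * s by lra.
rewrite low_rank_len_B_long ?(ltW x0) ?(ltW es) // (max_idPl _); last by nra.
have m0 : 0 <= Num.min x (s - e) by rewrite le_min subr_ge0 !ltW.
have mx : Num.min x (s - e) <= x by rewrite ge_min lexx.
have mse : Num.min x (s - e) <= s - e by rewrite ge_min lexx orbT.
move: (Num.min x (s - e)) m0 mx mse => m m0 mx mse.
have sq_m : m ^+ 2 <= x * m by rewrite expr2 ler_wpM2r.
have sq_x : x ^+ 2 <= (x * s / e) ^+ 2 by nra.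
have xm_le : x * m <= x * ((1 - b) * s) by rewrite ler_pM2l //; lra.
nra.
Qed.

Lemma rank_SRPT_SE_le x s e a : 0 < s -> 0 < e ->
  (rank_SRPT_SE s e a <= x) = (s - x * s / e <= a).
Proof.
move=> s0 e0; rewrite /rank_SRPT_SE lerBlDr -lerBlDl.
by rewrite mulrC -ler_pdivlMr ?divr_gt0 // invf_div mulrA.
Qed.

Lemma lebesgue_low_rank_ages_SE x s e : 0 < s -> 0 < e -> 0 < x ->
  lebesgue_measure (low_rank_ages rank_SRPT_SE s e x) = (low_rank_len_SE x s e)%:E.
Proof.
move=> s0 e0 x0; set q := x * s / e.
have q0 : 0 < q by rewrite divr_gt0 ?mulr_gt0.
have -> : low_rank_ages rank_SRPT_SE s e x = `[Num.max 0 (s - q), s[%classic.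
  apply/seteqP; split => a; rewrite /low_rank_ages /= in_itv /= ge_max.
  by rewrite rank_SRPT_SE_le // -/q => -[-> [-> ->]].
  by rewrite rank_SRPT_SE_le // -/q => /andP[/andP[-> ->] ->].
rewrite lebesgue_measure_itv /= lte_fin gt_max s0 /= ltrBlDr ltrDl q0 -EFinD.
by congr EFin; rewrite /low_rank_len_SE -/q minEle maxEle; do 2 case: leP => ?; lra.
Qed.

Lemma rank_SRPT_B_le x s e a : x < e ->
  (rank_SRPT_B s e a <= x) = (e - x <= a <= e + x).
Proof.
move=> xe; rewrite /rank_SRPT_B ge_min (leNgt e) xe orbF ler_norml.
by apply/idP/idP => /andP[? ?]; apply/andP; split; lra.
Qed.

Lemma lebesgue_low_rank_ages_B x s e : 0 < s -> 0 < x ->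
  lebesgue_measure (low_rank_ages rank_SRPT_B s e x) = (low_rank_len_B x s e)%:E.
Proof.
move=> s0 x0; rewrite /low_rank_len_B; have [ex|xe] := leP e x.
  have -> : low_rank_ages rank_SRPT_B s e x = `[0, s[%classic.
    apply/seteqP; split => a; rewrite /low_rank_ages /= in_itv /=.
      by move=> [-> [-> _]].
    by move=> /andP[a0 a_s]; rewrite /rank_SRPT_B ge_min ex orbT.
  by rewrite lebesgue_measure_itv /= lte_fin s0 -EFinD subr0.
have [sx|xs] := leP s (e + x).
  have -> : low_rank_ages rank_SRPT_B s e x = `[e - x, s[%classic.
    apply/seteqP; split => a; rewrite /low_rank_ages /= in_itv /= rank_SRPT_B_le //.
      by move=> [_ [-> /andP[-> _]]].
    by move=> /andP[h a_s]; rewrite h a_s /=; split; lra.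
  rewrite lebesgue_measure_itv /= lte_fin; case: ltP => ?.
    by rewrite -EFinD (max_idPr _) //; lra.
  by rewrite (max_idPl _) //; lra.
have -> : low_rank_ages rank_SRPT_B s e x = `[e - x, e + x]%classic.
  apply/seteqP; split => a; rewrite /low_rank_ages /= in_itv /= rank_SRPT_B_le //.
    by move=> [_ [_ ->]].
  by move=> /andP[h1 h2]; rewrite h1 h2; split; lra.
rewrite lebesgue_measure_itv /= lte_fin ifT; last lra.
by rewrite -EFinD (max_idPr _) //; lra.
Qed.
End low_rank_lengths.

Lemma measurable_funV_pos d (T : measurableType d) (R : realType) (f : T -> R) :
  measurable_fun setT f -> (forall t, 0 < f t) ->
  measurable_fun setT (fun t => (f t)^-1).
Proof.
move=> mf f_gt0; change (measurable_fun setT (GRing.inv \o f)).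
apply: (measurable_comp (F := `]0, +oo[%classic : set R)) mf => //.
- by move=> _ [t _ <-] /=; rewrite in_itv /= andbT.
- apply: open_continuous_measurable_fun; first exact: interval_open.
  move=> y; rewrite inE /= in_itv /= andbT => y0.
  by apply: inv_continuous; rewrite gt_eqF.
Qed.

Lemma ge0_ae_le_integralDZl d (T : measurableType d) (R : realType)
    (mu : {measure set T -> \bar R}) (f g h : T -> R) (c : R) :
  measurable_fun setT f -> measurable_fun setT g -> measurable_fun setT h ->
  (forall t, 0 <= f t) -> (forall t, 0 <= g t) -> (forall t, 0 <= h t) -> 0 <= c ->
  {ae mu, forall t, f t <= g t + c * h t} ->
  (\int[mu]_t (f t)%:E <= \int[mu]_t (g t)%:E + c%:E * \int[mu]_t (h t)%:E)%E.
Proof.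
move=> mf mg mh f0 g0 h0 c0 fgh.
have [mEf mEg mEh] : [/\ measurable_fun setT (EFin \o f),
    measurable_fun setT (EFin \o g) & measurable_fun setT (EFin \o h)].
  by split; exact/measurable_EFinP.
have mEch : measurable_fun setT (fun t => (c%:E * (h t)%:E)%E).
  by apply/measurable_EFinP; exact: measurable_funM.
have Eg0 t : [set: T] t -> (0 <= (g t)%:E)%E by rewrite lee_fin.
have Eh0 t : [set: T] t -> (0 <= (h t)%:E)%E by rewrite lee_fin.
have Ech0 t : [set: T] t -> (0 <= c%:E * (h t)%:E)%E by rewrite -EFinM lee_fin mulr_ge0.
rewrite -(ge0_integralZl_EFin _ _ Eh0 mEh c0) //=.
rewrite -(ge0_integralD _ _ Eg0 mEg Ech0 mEch) //.
apply: ae_ge0_le_integral => //.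
- by move=> t _; rewrite lee_fin.
- by move=> t _; apply: adde_ge0; [exact: Eg0 | exact: Ech0].
- exact: emeasurable_funD.
- by apply: filterS fgh => t fght _; rewrite -EFinM -EFinD lee_fin.
Qed.

Section measurable_low_rank_lengths.
Context d (T : measurableType d) (R : realType) (S Z : T -> R).
Hypotheses (mS : measurable_fun setT S) (mZ : measurable_fun setT Z).

Lemma measurable_low_rank_len_B (x : R) :
  measurable_fun setT (fun w => low_rank_len_B x (S w) (Z w)).
Proof.
apply: measurable_fun_ifT => //; first exact: measurable_fun_ler.
apply: measurable_maxr => //; apply: measurable_funB; last exact: measurable_funB.
by apply: measurable_minr => //; exact: measurable_funD.
Qed.

Lemma measurable_low_rank_len_SE (x : R) : (forall w, 0 < Z w) ->
  measurable_fun setT (fun w => low_rank_len_SE x (S w) (Z w)).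
Proof.
move=> Z_gt0; apply: measurable_minr => //.
by apply: measurable_funM; [exact: measurable_funM | exact: measurable_funV_pos].
Qed.

Lemma measurable_funM_ltr (x : R) :
  measurable_fun setT (fun w => S w * (x < Z w)%R%:R).
Proof.
rewrite (_ : (fun w => _) = (fun w => if x < Z w then S w else 0)).
  by apply: measurable_fun_ifT => //; exact: measurable_fun_ltr.
by apply/funext => w; case: ltP; rewrite ?mulr1 ?mulr0.
Qed.

End measurable_low_rank_lengths.

Lemma u_policyE {d} {T : measurableType d} {R : realType} (len : R -> R -> R)
    (P : probability T R) (S Z : T -> R) (r : R -> R -> R -> R) (x : R) :
  (forall w, lebesgue_measure (low_rank_ages r (S w) (Z w) x) = (len (S w) (Z w))%:E) ->
  u_policy P S Z r x = (\int[P]_w ((len (S w) (Z w)) ^+ 2)%:E)%E.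
Proof.
by move=> lenE; apply: eq_integral => w _; rewrite lenE EFin_expe.
Qed.

Theorem mainTheorem9 (d : measure_display) (T : measurableType d) (R : realType)
  (P : probability T R) (S Z : T -> R) (alpha beta : R)
  (mS : measurable_fun setT S) (mZ : measurable_fun setT Z)
  (Spos : forall w, 0 < S w) (Zpos : forall w, 0 < Z w)
  (hbeta : 0 < beta) (hba : beta <= alpha)
  (hlow : {ae P, forall w, beta * S w <= Z w})
  (z : R) (hz : 0 < z) :
  (u_policy P S Z rank_SRPT_B z
   <= u_policy P S Z rank_SRPT_SE z
      + (3 * z * Num.max (1 - beta) 0)%:E
        * \int[P]_w (S w * (z < Z w)%R%:R)%:E)%E.
Proof.
(* Only the lower bound [beta * S <= Z] matters; [alpha] and [0 < beta] are unused. *)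
rewrite (u_policyE (low_rank_len_B z)); last first.
  by move=> w; exact: lebesgue_low_rank_ages_B.
rewrite (u_policyE (low_rank_len_SE z)); last first.
  by move=> w; exact: lebesgue_low_rank_ages_SE.
apply: ge0_ae_le_integralDZl.
- exact/measurable_funX/measurable_low_rank_len_B.
- exact/measurable_funX/measurable_low_rank_len_SE.
- exact: measurable_funM_ltr.
- by move=> w; exact: sqr_ge0.
- by move=> w; exact: sqr_ge0.
- by move=> w; rewrite mulr_ge0 // ltW.
- by rewrite !mulr_ge0 ?le_max ?lexx ?orbT // ltW.
- by apply: filterS hlow => w; exact: low_rank_len_B_sqr_le.
Qed.
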